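(* Let $(\Omega,\mathcal A)$ be a Borel space, $(\Omega,X_\bullet)$ a Borel field of proper CAT(0) spaces, and $B_\bullet$ a Borel subfield such that $B_\omega$ is a non-empty bounded subset of $X_\omega$ for every $\omega$. Then (i) the circumradius function $\omega\mapsto r(B_\omega)$ is Borel, and (ii) the section of circumcenters $\omega\mapsto c_{B_\omega}$ is a Borel section of $(\Omega,X_\bullet)$.
   Context: Borel field of metric spaces: $(X_\omega,d_\omega)_{\omega\in\Omega}$ metric spaces; a section is $x_\bullet=(x_\omega)$, $x_\omega\in X_\omega$. A Borel structure is a set $\mathcal L(\Omega,X_\bullet)$ of sections such that (a) $\omega\mapsto d_\omega(x_\omega,y_\omega)$ is Borel for all $x_\bullet,y_\bullet\in\mathcal L$; (b) any section $y_\bullet$ with $\omega\mapsto d_\omega(x_\omega,y_\omega)$ Borel for all $x_\bullet\in\mathcal L$ lies in $\mathcal L$; (c) there is a countable $\mathcal D=\{x^n_\bullet\}\subseteq\mathcal L$ (fundamental family) with $\{x^n_\omega\}_n$ dense in $X_\omega$ for all $\omega$; elements of $\mathcal L$ are Borel sections. For Borel $\Omega'$, $\mathcal L(\Omega',X_\bullet)$ = restrictions to $\Omega'$ of Borel sections. A subfield is $A_\bullet=(A_\omega)$ with $A_\omega\subseteq X_\omega$; it is Borel if $\Omega'=\{\omega:A_\omega\ne\emptyset\}\in\mathcal A$ and there are countably many $y^n_\bullet\in\mathcal L(\Omega',X_\bullet)$ with $y^n_\omega\in A_\omega$ and $A_\omega\subseteq\overline{\{y^n_\omega\}_n}$ for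 all $\omega\in\Omega'$. For a non-empty bounded $B$ in a complete CAT(0) space $X$, the circumradius is $r(B)=\inf\{r>0\mid\exists x\in X,\ B\subseteq\overline B(x,r)\}$ and the circumcenter $c_B$ is the unique point with $B\subseteq\overline B(c_B,r(B))$. *)

From Stdlib Require Import Reals Lra List.
Open Scope R_scope.


Definition is_sigma_algebra {T : Type} (A : (T -> Prop) -> Prop) : Prop :=
  A (fun _ => True) /\
  (forall S, A S -> A (fun x => ~ S x)) /\
  (forall S : nat -> T -> Prop, (forall n, A (S n)) -> A (fun x => exists n, S n x)).

Definition R_open (U : R -> Prop) : Prop :=
  forall x, U x -> exists e, 0 < e /\ forall y, Rabs (y - x) < e -> U y.

Definition R_Borel (S : R -> Prop) : Prop :=
  forall M : (R -> Prop) -> Prop,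
    is_sigma_algebra M -> (forall U, R_open U -> M U) -> M S.

Definition Borel_function {Om : Type} (A : (Om -> Prop) -> Prop) (f : Om -> R) : Prop :=
  forall S, R_Borel S -> A (fun w => S (f w)).

Definition is_metric {X : Type} (d : X -> X -> R) : Prop :=
  (forall x y, d x y = 0 <-> x = y) /\
  (forall x y, d x y = d y x) /\
  (forall x y z, d x z <= d x y + d y z).

Definition open_set {X : Type} (d : X -> X -> R) (U : X -> Prop) : Prop :=
  forall x, U x -> exists e, 0 < e /\ forall y, d x y < e -> U y.

Definition compact_set {X : Type} (d : X -> X -> R) (K : X -> Prop) : Prop :=
  forall F : (X -> Prop) -> Prop,
    (forall U, F U -> open_set d U) ->
    (forall x, K x -> exists U, F U /\ U x) ->
    exists l : list (X -> Prop),
      (forall U, In U l -> F U) /\ (forall x, K x -> exists U, In U l /\ U x).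

Definition closed_ball {X : Type} (d : X -> X -> R) (x : X) (r : R) : X -> Prop :=
  fun y => d x y <= r.

Definition proper_space {X : Type} (d : X -> X -> R) : Prop :=
  forall x r, compact_set d (closed_ball d x r).

Definition bounded_set {X : Type} (d : X -> X -> R) (B : X -> Prop) : Prop :=
  exists x r, forall b, B b -> d x b <= r.

Definition is_geodesic {X : Type} (d : X -> X -> R) (x y : X) (g : R -> X) : Prop :=
  g 0 = x /\ g (d x y) = y /\
  forall s t, 0 <= s <= d x y -> 0 <= t <= d x y -> d (g s) (g t) = Rabs (s - t).

Definition geodesic_space {X : Type} (d : X -> X -> R) : Prop :=
  forall x y, exists g, is_geodesic d x y g.

Definition eucl2 (a b : R * R) : R :=
  sqrt ((fst a - fst b) ^ 2 + (snd a - snd b) ^ 2).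

Definition on_side {X : Type} (d : X -> X -> R) (x y : X) (g : R -> X)
  (a b : R * R) (p : X) (pb : R * R) : Prop :=
  exists t, 0 <= t <= 1 /\ p = g (t * d x y) /\
    pb = ((1 - t) * fst a + t * fst b, (1 - t) * snd a + t * snd b).

Definition on_triangle {X : Type} (d : X -> X -> R) (x y z : X)
  (gxy gyz gzx : R -> X) (a b c : R * R) (p : X) (pb : R * R) : Prop :=
  on_side d x y gxy a b p pb \/ on_side d y z gyz b c p pb \/ on_side d z x gzx c a p pb.

Definition CAT0_inequality {X : Type} (d : X -> X -> R) : Prop :=
  forall (x y z : X) (gxy gyz gzx : R -> X) (a b c : R * R),
    is_geodesic d x y gxy -> is_geodesic d y z gyz -> is_geodesic d z x gzx ->
    eucl2 a b = d x y -> eucl2 b c = d y z -> eucl2 c a = d z x ->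
    forall p pb q qb,
      on_triangle d x y z gxy gyz gzx a b c p pb ->
      on_triangle d x y z gxy gyz gzx a b c q qb ->
      d p q <= eucl2 pb qb.

Definition CAT0_space {X : Type} (d : X -> X -> R) : Prop :=
  is_metric d /\ geodesic_space d /\ CAT0_inequality d.

Definition is_inf (S : R -> Prop) (m : R) : Prop :=
  (forall r, S r -> m <= r) /\ (forall m', (forall r, S r -> m' <= r) -> m' <= m).

Definition is_circumradius {X : Type} (d : X -> X -> R) (B : X -> Prop) (r : R) : Prop :=
  is_inf (fun s => 0 < s /\ exists x, forall b, B b -> d x b <= s) r.

Definition is_circumcenter {X : Type} (d : X -> X -> R) (B : X -> Prop) (c : X) : Prop :=
  exists r, is_circumradius d B r /\ forall b, B b -> d c b <= r.

Definition section {Om : Type} (X : Om -> Type) : Type := forall w, X w.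

Definition is_Borel_structure {Om : Type} (A : (Om -> Prop) -> Prop) (X : Om -> Type)
  (d : forall w, X w -> X w -> R) (L : section X -> Prop) : Prop :=
  (forall x y, L x -> L y -> Borel_function A (fun w => d w (x w) (y w))) /\
  (forall y : section X,
     (forall x, L x -> Borel_function A (fun w => d w (x w) (y w))) -> L y) /\
  (exists D : nat -> section X,
     (forall n, L (D n)) /\
     forall w (x : X w) e, 0 < e -> exists n, d w (D n w) x < e).

(* Borel subfield.  Elements of L(Om', X) are restrictions to Om' of Borel
   sections; we represent y^n by a Borel section whose restriction is y^n. *)
Definition is_Borel_subfield {Om : Type} (A : (Om -> Prop) -> Prop) (X : Om -> Type)
  (d : forall w, X w -> X w -> R) (L : section X -> Prop)
  (B : forall w, X w -> Prop) : Prop :=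
  A (fun w => exists x, B w x) /\
  exists y : nat -> section X,
    (forall n, L (y n)) /\
    forall w, (exists x, B w x) ->
      (forall n, B w (y n w)) /\
      (forall x, B w x -> forall e, 0 < e -> exists n, d w x (y n w) < e).

(** Fibrewise: the CAT(0) inequality applied to a midpoint gives the Euclidean
    midpoint estimate, hence the uniform convexity bound
    [d(x,x')^2 <= 2s^2 + 2s'^2 - 4 r(S)^2] for centres of balls of radii [s], [s']
    containing [S].  So centres of balls of radius [r(S) + 1/(k+1)] form a Cauchy
    sequence, which converges in a proper space to the circumcenter.

    Measurability: with a fundamental family [D] and a sequence [y] dense in [B], the
    conditions [r(B_w) < a] and [d(x_w, c_w) < a] are equivalent to countable
    combinations of inequalities on the Borel functions [d(D^n_w, y^m_w)]; the
    uniform convexity bound is what makes the second description possible.  Since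
    a real function is Borel as soon as its sets [f < a] are measurable, (i)
    follows, and (ii) follows from axiom (b) of a Borel structure. *)

From Stdlib Require Import Reals Lra Lia Psatz List Classical ClassicalEpsilon
  FunctionalExtensionality PropExtensionality ZArith.
Open Scope R_scope.

Lemma inv_succ_bounds (k : nat) : 0 < / (INR k + 1) <= 1.
Proof.
  pose proof (pos_INR k). split.
  - apply Rinv_0_lt_compat; lra.
  - rewrite <- Rinv_1. apply Rinv_le_contravar; lra.
Qed.

Lemma inv_succ_antitone (k N : nat) : (N <= k)%nat -> / (INR k + 1) <= / (INR N + 1).
Proof.
  intros H. apply le_INR in H. pose proof (pos_INR N).
  apply Rinv_le_contravar; lra.
Qed.

Lemma inv_succ_small a : 0 < a -> exists N : nat, / (INR N + 1) < a.
Proof.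
  intros Ha. destruct (archimed_cor1 a Ha) as [N [H1 H2]]. exists N.
  apply lt_0_INR in H2.
  apply Rle_lt_trans with (/ INR N); [|exact H1].
  apply Rinv_le_contravar; lra.
Qed.

Section Metric.
Context {X : Type} (d : X -> X -> R) (M : is_metric d).

Lemma dist_refl x : d x x = 0.
Proof. destruct M as [H _]. apply H. reflexivity. Qed.

Lemma dist_sym x y : d x y = d y x.
Proof. destruct M as [_ [H _]]. apply H. Qed.

Lemma dist_tri x y z : d x z <= d x y + d y z.
Proof. destruct M as [_ [_ H]]. apply H. Qed.

Lemma dist_nonneg x y : 0 <= d x y.
Proof. pose proof (dist_tri x y x). rewrite dist_refl, (dist_sym y x) in H. lra. Qed.

Lemma bound_from_dense (S : X -> Prop) (y : nat -> X) z s :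
  (forall b, S b -> forall e, 0 < e -> exists m, d b (y m) < e) ->
  (forall m, d z (y m) <= s) -> forall b, S b -> d z b <= s.
Proof.
  intros Hdense Hs b Sb. apply Rle_plus_epsilon. intros e He.
  destruct (Hdense b Sb e He) as [m Hm].
  pose proof (Hs m). pose proof (dist_tri z (y m) b).
  rewrite (dist_sym (y m) b) in H0. lra.
Qed.

End Metric.

(** * The CAT(0) midpoint inequality *)

Lemma eucl2_sq a b : (eucl2 a b)^2 = (fst a - fst b)^2 + (snd a - snd b)^2.
Proof. unfold eucl2. apply pow2_sqrt. apply Rplus_le_le_0_compat; apply pow2_ge_0. Qed.

Lemma eucl2_of_sq a b t : 0 <= t -> (fst a - fst b)^2 + (snd a - snd b)^2 = t^2 ->
  eucl2 a b = t.
Proof. intros Ht H. unfold eucl2. rewrite H. apply sqrt_pow2, Ht. Qed.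

(* Side lengths [D, q, p] satisfying the triangle inequalities are realised by the
   Euclidean triangle with vertices (0,0), (D,0), (u,v). *)
Lemma comparison_triangle (D p q : R) : 0 < D -> 0 <= p -> 0 <= q ->
  p <= D + q -> q <= D + p -> D <= p + q ->
  exists u v, u * (2 * D) = D^2 + p^2 - q^2 /\ u^2 + v^2 = p^2 /\ (D - u)^2 + v^2 = q^2.
Proof.
  intros HD Hp Hq T1 T2 T3.
  set (u := (D^2 + p^2 - q^2) / (2 * D)).
  assert (Hu : u * (2 * D) = D^2 + p^2 - q^2) by (unfold u; field; lra).
  assert (Hcos : (D^2 + p^2 - q^2)^2 <= 4 * D^2 * p^2).
  { assert (D^2 + p^2 - q^2 - 2 * D * p <= 0).
    { replace (D^2 + p^2 - q^2 - 2 * D * p) with ((D - p - q) * (D - p + q)) by ring.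
      assert (0 <= D - p + q) by lra. assert (D - p - q <= 0) by lra. nra. }
    assert (0 <= D^2 + p^2 - q^2 + 2 * D * p).
    { replace (D^2 + p^2 - q^2 + 2 * D * p) with ((D + p - q) * (D + p + q)) by ring.
      apply Rmult_le_pos; lra. }
    nra. }
  assert (Hv : 0 <= p^2 - u^2).
  { rewrite <- Hu in Hcos.
    destruct (Rle_or_lt 0 (p^2 - u^2)) as [h|h]; [exact h|].
    assert ((p^2 - u^2) * (4 * D^2) < 0) by (apply Rmult_neg_pos; nra). nra. }
  exists u, (sqrt (p^2 - u^2)).
  assert (Hvv : sqrt (p^2 - u^2) ^ 2 = p^2 - u^2) by (apply pow2_sqrt, Hv).
  split; [exact Hu|]. split; [lra|].
  replace ((D - u)^2 + sqrt (p^2 - u^2) ^ 2)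
    with (D^2 - u * (2 * D) + (u^2 + sqrt (p^2 - u^2) ^ 2)) by ring.
  lra.
Qed.

(* The CAT(0) inequality applied to the midpoint [m] of a side [x y] and the opposite
   vertex [z]: the squared distance to [m] is controlled as in the Euclidean plane. *)
Lemma CAT0_midpoint_inequality {X} (d : X -> X -> R) : CAT0_space d ->
  forall x y, 0 < d x y ->
  exists m, forall z, (d m z)^2 <= (d x z)^2/2 + (d y z)^2/2 - (d x y)^2/4.
Proof.
  intros [M [G C]] x y Hxy.
  destruct (G x y) as [g Hg].
  exists (g (/2 * d x y)). intros z.
  destruct (G y z) as [g2 Hg2]. destruct (G z x) as [g3 Hg3].
  pose proof (dist_tri d M x y z) as T1.
  pose proof (dist_tri d M y x z) as T2. rewrite (dist_sym d M y x) in T2.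
  pose proof (dist_tri d M x z y) as T3. rewrite (dist_sym d M z y) in T3.
  destruct (comparison_triangle (d x y) (d x z) (d y z)) as [u [v [Hu [Hp Hq]]]];
    try (apply dist_nonneg; exact M); try lra.
  assert (E1 : eucl2 (0, 0) (d x y, 0) = d x y).
  { apply eucl2_of_sq; cbn [fst snd]; [lra|ring]. }
  assert (E2 : eucl2 (d x y, 0) (u, v) = d y z).
  { apply eucl2_of_sq; cbn [fst snd]; [apply dist_nonneg, M|]. rewrite <- Hq. ring. }
  assert (E3 : eucl2 (u, v) (0, 0) = d z x).
  { rewrite (dist_sym d M z x).
    apply eucl2_of_sq; cbn [fst snd]; [apply dist_nonneg, M|]. rewrite <- Hp. ring. }
  assert (Hmid : on_triangle d x y z g g2 g3 (0, 0) (d x y, 0) (u, v) (g (/2 * d x y))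
      ((1 - /2) * 0 + /2 * d x y, (1 - /2) * 0 + /2 * 0)).
  { left. exists (/2). split; [lra|]. split; reflexivity. }
  assert (Hvertex : on_triangle d x y z g g2 g3 (0, 0) (d x y, 0) (u, v) z
      ((1 - 0) * u + 0 * 0, (1 - 0) * v + 0 * 0)).
  { right; right. exists 0. split; [lra|]. split; [|reflexivity].
    rewrite Rmult_0_l. symmetry. apply Hg3. }
  pose proof (C x y z g g2 g3 _ _ _ Hg Hg2 Hg3 E1 E2 E3 _ _ _ _ Hmid Hvertex) as Hcmp.
  assert (Hsq := pow_incr _ _ 2 (conj (dist_nonneg d M _ _) Hcmp)).
  rewrite eucl2_sq in Hsq. simpl fst in Hsq. simpl snd in Hsq.
  replace (((1 - /2) * 0 + /2 * d x y - ((1 - 0) * u + 0 * 0))^2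
           + ((1 - /2) * 0 + /2 * 0 - ((1 - 0) * v + 0 * 0))^2)
    with ((d x y)^2/4 - u * (2 * d x y) / 2 + (u^2 + v^2)) in Hsq by field.
  rewrite Hu, Hp in Hsq. lra.
Qed.

Section Circumradius.
Context {X : Type} (d : X -> X -> R) (S : X -> Prop).

Lemma circumradius_nonneg r : is_circumradius d S r -> 0 <= r.
Proof. intros [_ H]. apply H. intros s [Hs _]. lra. Qed.

Lemma circumradius_le r x t : is_circumradius d S r -> 0 <= t ->
  (forall b, S b -> d x b <= t) -> r <= t.
Proof.
  intros [H _] Ht Hb. apply Rle_plus_epsilon. intros e He.
  apply H. split; [lra|]. exists x. intros b Bb. specialize (Hb b Bb). lra.
Qed.

Lemma circumradius_approx r e : is_circumradius d S r -> 0 < e ->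
  exists x, forall b, S b -> d x b < r + e.
Proof.
  intros [H1 H2] He. apply NNPP. intro N.
  assert (r + e <= r); [|lra].
  apply H2. intros s [Hs [x Hx]].
  destruct (Rle_or_lt (r + e) s) as [h|h]; [exact h|].
  exfalso. apply N. exists x. intros b Bb. specialize (Hx b Bb). lra.
Qed.

Lemma circumradius_unique r r' : is_circumradius d S r -> is_circumradius d S r' -> r = r'.
Proof. intros [A1 A2] [B1 B2]. apply Rle_antisym; [apply B2|apply A2]; assumption. Qed.

Lemma circumradius_exists : bounded_set d S -> exists r, is_circumradius d S r.
Proof.
  intros [x0 [r0 H0]].
  set (Radii := fun s => 0 < s /\ exists x, forall b, S b -> d x b <= s).
  destruct (completeness (fun t => Radii (- t))) as [m [Hm1 Hm2]].
  { exists 0. intros t [Ht _]. lra. }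
  { exists (- (Rabs r0 + 1)). unfold Radii. rewrite Ropp_involutive. split.
    - pose proof (Rabs_pos r0). lra.
    - exists x0. intros b Bb. pose proof (H0 b Bb). pose proof (Rle_abs r0). lra. }
  exists (- m). split.
  - intros s Hs.
    assert (- s <= m) by (apply Hm1; unfold Radii; rewrite Ropp_involutive; exact Hs).
    lra.
  - intros m' Hm'. assert (m <= - m'); [|lra].
    apply Hm2. intros t Ht. specialize (Hm' (- t) Ht). lra.
Qed.

(* Uniform convexity: centres of balls of radii [s], [s'] containing [S] are at
   distance at most [sqrt (2 s^2 + 2 s'^2 - 4 r(S)^2)]; the midpoint of the two
   centres is the centre of a smaller ball containing [S]. *)
Lemma approximate_centers_close r b0 x x' s s' : CAT0_space d ->
  is_circumradius d S r -> S b0 ->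
  (forall b, S b -> d x b <= s) -> (forall b, S b -> d x' b <= s') ->
  (d x x')^2 <= 2 * s^2 + 2 * s'^2 - 4 * r^2.
Proof.
  intros HC Hr Hb0 Hs Hs'. pose proof HC as [M _].
  assert (s0 : 0 <= s) by (pose proof (dist_nonneg d M x b0); pose proof (Hs b0 Hb0); lra).
  assert (s0' : 0 <= s') by (pose proof (dist_nonneg d M x' b0); pose proof (Hs' b0 Hb0); lra).
  pose proof (circumradius_nonneg r Hr) as r0.
  pose proof (circumradius_le r x s Hr s0 Hs) as rs.
  pose proof (circumradius_le r x' s' Hr s0' Hs') as rs'.
  pose proof (dist_nonneg d M x x') as P.
  destruct (Req_dec (d x x') 0) as [h|h]; [rewrite h; nra|].
  destruct (CAT0_midpoint_inequality d HC x x') as [m Hm]; [lra|].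
  set (v := s^2/2 + s'^2/2 - (d x x')^2/4).
  assert (Hv : forall b, S b -> (d m b)^2 <= v).
  { intros b Bb. pose proof (Hm b). pose proof (Hs b Bb). pose proof (Hs' b Bb).
    pose proof (dist_nonneg d M x b). pose proof (dist_nonneg d M x' b). unfold v. nra. }
  assert (v0 : 0 <= v) by (pose proof (Hv b0 Hb0); nra).
  assert (Hball : forall b, S b -> d m b <= sqrt v).
  { intros b Bb. rewrite <- (sqrt_pow2 (d m b)) by (apply dist_nonneg, M).
    apply sqrt_le_1_alt, Hv, Bb. }
  pose proof (circumradius_le r m (sqrt v) Hr (sqrt_pos v) Hball).
  assert (r^2 <= v) by (rewrite <- (pow2_sqrt v v0); nra).
  unfold v in *. nra.
Qed.

End Circumradius.

(** * Proper metric spaces are complete *)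
Section Proper.
Context {X : Type} (d : X -> X -> R) (M : is_metric d).

Definition converges_to (z : nat -> X) (c : X) : Prop :=
  forall e, 0 < e -> exists N, forall k, (N <= k)%nat -> d c (z k) < e.

Definition cauchy (z : nat -> X) : Prop :=
  forall e, 0 < e -> exists N, forall k l, (N <= k)%nat -> (N <= l)%nat -> d (z k) (z l) < e.

Lemma eventually_avoid_all (z : nat -> X) (l : list (X -> Prop)) :
  (forall U, In U l -> exists N, forall k, (N <= k)%nat -> ~ U (z k)) ->
  exists N, forall U, In U l -> forall k, (N <= k)%nat -> ~ U (z k).
Proof.
  induction l as [|U0 l IH]; intros H.
  - exists 0%nat. intros U [].
  - destruct (H U0 (or_introl eq_refl)) as [N0 HN0].
    destruct IH as [N1 HN1]. { intros U HU. apply H. right. exact HU. }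
    exists (Nat.max N0 N1). intros U [<-|HU] k Hk.
    + apply HN0. lia.
    + apply HN1; [exact HU|lia].
Qed.

Lemma not_limit_frequently_far (z : nat -> X) p : ~ converges_to z p ->
  exists e, 0 < e /\ forall N, exists k, (N <= k)%nat /\ e <= d p (z k).
Proof.
  intros Hn. apply NNPP. intro Hfar. apply Hn. intros e He. apply NNPP. intro HN.
  apply Hfar. exists e. split; [exact He|]. intros N. apply NNPP. intro Hk.
  apply HN. exists N. intros k Hkn. apply NNPP. intro Hd. apply Hk. exists k.
  split; [exact Hkn|]. lra.
Qed.

(* A bounded Cauchy sequence converges: otherwise every point of a closed ball
   containing it has a neighbourhood eventually avoided by the sequence, and a finite
   subcover of the (compact) ball is avoided by a single term lying in the ball. *)
Lemma proper_cauchy_converges (z : nat -> X) : proper_space d -> cauchy z ->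
  (exists x0 R0, forall k, d x0 (z k) <= R0) -> exists c, converges_to z c.
Proof.
  intros P Cau [x0 [R0 HB]]. apply NNPP. intro NC.
  set (F := fun U : X -> Prop =>
    open_set d U /\ exists N, forall k, (N <= k)%nat -> ~ U (z k)).
  destruct (P x0 R0 F) as [l [Hl1 Hl2]].
  - intros U [HU _]. exact HU.
  - intros p _.
    destruct (not_limit_frequently_far z p) as [e [He Hp]].
    { intro Hc. apply NC. exists p. exact Hc. }
    destruct (Cau (e/2)) as [N HN]; [lra|].
    exists (fun y => d p y < e/2). split; [split|].
    + intros y Hy. exists (e/2 - d p y). split; [lra|]. intros y' Hy'.
      pose proof (dist_tri d M p y y'). lra.
    + exists N. intros k Hk Hc. destruct (Hp N) as [k0 [Hk0 Hd]].
      pose proof (HN k k0 Hk Hk0). pose proof (dist_tri d M p (z k) (z k0)). lra.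
    + rewrite (dist_refl d M). lra.
  - destruct (eventually_avoid_all z l) as [N HN].
    + intros U HU. apply (Hl1 U HU).
    + destruct (Hl2 (z N) (HB N)) as [U [HU HzU]].
      exact (HN U HU N (le_n N) HzU).
Qed.

End Proper.

Section Circumcenter.
Context {X : Type} (d : X -> X -> R) (S : X -> Prop) (r : R) (b0 : X).
Hypothesis HC : CAT0_space d.
Hypothesis Hr : is_circumradius d S r.
Hypothesis Hb0 : S b0.

Lemma approximate_centers_cauchy (z : nat -> X) :
  (forall k b, S b -> d (z k) b <= r + / (INR k + 1)) -> cauchy d z.
Proof.
  intros Hz e He. pose proof HC as [M _].
  pose proof (circumradius_nonneg d S r Hr) as r0.
  destruct (inv_succ_small (e^2 / (8 * r + 4))) as [N HN].
  { apply Rdiv_lt_0_compat; nra. }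
  exists N. intros k l Hk Hl.
  pose proof (approximate_centers_close d S r b0 (z k) (z l) _ _ HC Hr Hb0 (Hz k) (Hz l)) as K.
  pose proof (inv_succ_antitone k N Hk). pose proof (inv_succ_antitone l N Hl).
  pose proof (inv_succ_bounds k). pose proof (inv_succ_bounds l). pose proof (inv_succ_bounds N).
  set (a := / (INR k + 1)) in *. set (b := / (INR l + 1)) in *. set (c := / (INR N + 1)) in *.
  assert (c * (8 * r + 4) < e^2).
  { apply Rmult_lt_reg_r with (/ (8 * r + 4)); [apply Rinv_0_lt_compat; lra|].
    rewrite Rmult_assoc, Rinv_r by lra. lra. }
  assert ((d (z k) (z l))^2 < e^2) by nra.
  pose proof (dist_nonneg d M (z k) (z l)). nra.
Qed.

Lemma circumcenter_exists : proper_space d -> exists c, is_circumcenter d S c.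
Proof.
  intros HP. pose proof HC as [M _].
  assert (Hk : forall k : nat, exists x, forall b, S b -> d x b <= r + / (INR k + 1)).
  { intros k. destruct (circumradius_approx d S r _ Hr (proj1 (inv_succ_bounds k))) as [x Hx].
    exists x. intros b Bb. specialize (Hx b Bb). lra. }
  destruct (choice _ Hk) as [z Hz].
  destruct (proper_cauchy_converges d M z HP) as [c Hc].
  - exact (approximate_centers_cauchy z Hz).
  - exists (z 0%nat), (2 * r + 2). intros k.
    pose proof (dist_tri d M (z 0%nat) b0 (z k)). pose proof (Hz 0%nat b0 Hb0).
    pose proof (Hz k b0 Hb0). rewrite (dist_sym d M b0 (z k)) in H.
    pose proof (inv_succ_bounds 0). pose proof (inv_succ_bounds k). lra.
  - exists c, r. split; [exact Hr|]. intros b Bb.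
    apply Rle_plus_epsilon. intros e He.
    destruct (Hc (e/2)) as [N1 HN1]; [lra|].
    destruct (inv_succ_small (e/2)) as [N2 HN2]; [lra|].
    set (k := Nat.max N1 N2).
    pose proof (HN1 k (Nat.le_max_l _ _)). pose proof (inv_succ_antitone k N2 (Nat.le_max_r _ _)).
    pose proof (Hz k b Bb). pose proof (dist_tri d M c (z k) b). lra.
Qed.

End Circumcenter.

Section SigmaAlgebra.
Context {Om : Type} (A : (Om -> Prop) -> Prop).

Lemma sa_ext (S S' : Om -> Prop) : A S -> (forall x, S x <-> S' x) -> A S'.
Proof.
  intros H E. replace S' with S; [exact H|].
  apply functional_extensionality. intros x. apply propositional_extensionality, E.
Qed.

Hypothesis HA : is_sigma_algebra A.

Lemma sa_compl S : A S -> A (fun x => ~ S x).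
Proof. destruct HA as [_ [H _]]. apply H. Qed.

Lemma sa_union (S : nat -> Om -> Prop) : (forall n, A (S n)) -> A (fun x => exists n, S n x).
Proof. destruct HA as [_ [_ H]]. apply H. Qed.

Lemma sa_empty : A (fun _ => False).
Proof. apply (sa_ext (fun _ => ~ True)); [apply sa_compl, HA|tauto]. Qed.

Lemma sa_inter (S : nat -> Om -> Prop) : (forall n, A (S n)) -> A (fun x => forall n, S n x).
Proof.
  intros H. apply (sa_ext (fun x => ~ exists n, ~ S n x)).
  - apply sa_compl, sa_union. intros n. apply sa_compl, H.
  - intros x. split.
    + intros h n. apply NNPP. intro h'. apply h. exists n. exact h'.
    + intros h [n hn]. apply hn, h.
Qed.

Lemma sa_or S T : A S -> A T -> A (fun x => S x \/ T x).
Proof.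
  intros HS HT. apply (sa_ext (fun x => exists n, (match n with O => S | _ => T end) x)).
  - apply sa_union. intros [|n]; assumption.
  - intros x. split.
    + intros [[|n] h]; [left|right]; exact h.
    + intros [h|h]; [exists O|exists 1%nat]; exact h.
Qed.

Lemma sa_and S T : A S -> A T -> A (fun x => S x /\ T x).
Proof.
  intros HS HT. apply (sa_ext (fun x => forall n, (match n with O => S | _ => T end) x)).
  - apply sa_inter. intros [|n]; assumption.
  - intros x. split.
    + intros h. split; [apply (h O)|apply (h 1%nat)].
    + intros [h1 h2] [|n]; assumption.
Qed.

Lemma sa_union_Z (S : Z -> Om -> Prop) : (forall z, A (S z)) -> A (fun x => exists z, S z x).
Proof.
  intros H. apply (sa_ext (fun x => exists n, S (Z.of_nat n) x \/ S (- Z.of_nat n)%Z x)).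
  - apply sa_union. intros n. apply sa_or; apply H.
  - intros x. split.
    + intros [n [h|h]]; eexists; exact h.
    + intros [[|p|p] h].
      * exists O. left. exact h.
      * exists (Pos.to_nat p). left. rewrite positive_nat_Z. exact h.
      * exists (Pos.to_nat p). right. rewrite positive_nat_Z. exact h.
Qed.

End SigmaAlgebra.

Lemma grid_point_above (y : R) (k : nat) :
  exists j : Z, y < IZR j / (INR k + 1) <= y + / (INR k + 1).
Proof.
  pose proof (pos_INR k).
  destruct (archimed (y * (INR k + 1))) as [a1 a2].
  exists (up (y * (INR k + 1))). split.
  - apply Rmult_lt_reg_r with (INR k + 1); [lra|].
    unfold Rdiv. rewrite Rmult_assoc, Rinv_l by lra. lra.
  - apply Rmult_le_reg_r with (INR k + 1); [lra|].
    unfold Rdiv. rewrite Rmult_assoc, Rinv_l, Rmult_plus_distr_r, Rinv_l by lra. lra.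
Qed.

Lemma open_grid_union (U : R -> Prop) y : R_open U -> U y ->
  exists (k : nat) (j : Z),
    (forall z, IZR j / (INR k + 1) < z < IZR (j + 2) / (INR k + 1) -> U z) /\
    IZR j / (INR k + 1) < y < IZR (j + 2) / (INR k + 1).
Proof.
  intros HU Hy. destruct (HU y Hy) as [e [He Hball]].
  destruct (inv_succ_small (e/2)) as [k hk]; [lra|].
  pose proof (pos_INR k).
  destruct (grid_point_above y k) as [j [hj1 hj2]].
  assert (Hstep : IZR (j - 2) / (INR k + 1) = IZR j / (INR k + 1) - 2 * / (INR k + 1)).
  { rewrite minus_IZR. field. lra. }
  exists k, (j - 2)%Z. replace (j - 2 + 2)%Z with j by ring. rewrite Hstep.
  split; [|lra].
  intros z hz. apply Hball. apply Rabs_def1; lra.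
Qed.

Section BorelFunctions.
Context {Om : Type} (A : (Om -> Prop) -> Prop) (HA : is_sigma_algebra A).

Lemma Borel_lt f a : Borel_function A f -> A (fun w => f w < a).
Proof.
  intros H. apply (H (fun y => y < a)). intros Ms _ HMs. apply HMs.
  intros x Hx. exists (a - x). split; [lra|]. intros y Hy.
  pose proof (Rle_abs (y - x)). lra.
Qed.

Lemma sa_gt_of_lt f q : (forall a, A (fun w => f w < a)) -> A (fun w => q < f w).
Proof.
  intros H. apply (sa_ext A (fun w => exists n, ~ (f w < q + / (INR n + 1)))).
  - apply sa_union; [exact HA|]. intros n. apply sa_compl; auto.
  - intros w. split.
    + intros [n hn]. pose proof (inv_succ_bounds n). lra.
    + intros h. destruct (inv_succ_small (f w - q)) as [n hn]; [lra|]. exists n. lra.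
Qed.

Lemma Borel_le f a : Borel_function A f -> A (fun w => f w <= a).
Proof.
  intros H. apply (sa_ext A (fun w => ~ (a < f w))).
  - apply sa_compl; [exact HA|]. apply sa_gt_of_lt. intros b. apply Borel_lt, H.
  - intros w. split; intros; lra.
Qed.

(* Borel measurability is tested on the sets [f < a]: their sigma-algebra contains
   the preimages of the grid intervals, hence of all open sets. *)
Lemma Borel_of_lt f : (forall a, A (fun w => f w < a)) -> Borel_function A f.
Proof.
  intros H S HS. apply HS.
  - split; [|split].
    + apply HA.
    + intros T HT. apply sa_compl; assumption.
    + intros T HT. apply (sa_union A HA (fun n w => T n (f w))); assumption.
  - intros U HU.
    set (Grid := fun k j z => IZR j / (INR k + 1) < z < IZR (j + 2) / (INR k + 1)).
    apply (sa_ext A (fun w => exists k j, (forall z, Grid k j z -> U z) /\ Grid k j (f w))).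
    + apply sa_union; [exact HA|]. intros k. apply sa_union_Z; [exact HA|]. intros j.
      destruct (classic (forall z, Grid k j z -> U z)) as [c|c].
      * apply (sa_ext A (fun w => Grid k j (f w))); [|tauto].
        apply sa_and; [exact HA| |apply H]. apply sa_gt_of_lt, H.
      * apply (sa_ext A (fun _ => False)); [apply sa_empty, HA|tauto].
    + intros w. split.
      * intros [k [j [h1 h2]]]. apply h1, h2.
      * intros h. exact (open_grid_union U (f w) HU h).
Qed.

Lemma Borel_lt2 f g : Borel_function A f -> Borel_function A g -> A (fun w => f w < g w).
Proof.
  intros Hf Hg.
  apply (sa_ext A (fun w => exists k j, f w < IZR j / (INR k + 1) /\ IZR j / (INR k + 1) < g w)).
  - apply sa_union; [exact HA|]. intros k. apply sa_union_Z; [exact HA|]. intros j.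
    apply sa_and; [exact HA|apply Borel_lt, Hf|].
    apply sa_gt_of_lt. intros a. apply Borel_lt, Hg.
  - intros w. split.
    + intros [k [j h]]. lra.
    + intros h. destruct (inv_succ_small (g w - f w)) as [k hk]; [lra|].
      destruct (grid_point_above (f w) k) as [j hj]. exists k, j. lra.
Qed.

Lemma Borel_le2 f g : Borel_function A f -> Borel_function A g -> A (fun w => f w <= g w).
Proof.
  intros Hf Hg. apply (sa_ext A (fun w => ~ (g w < f w))).
  - apply sa_compl; [exact HA|]. apply Borel_lt2; assumption.
  - intros w; split; intros; lra.
Qed.

Lemma Borel_comp (phi : R -> R) f : (forall x, continuity_pt phi x) ->
  Borel_function A f -> Borel_function A (fun w => phi (f w)).
Proof.
  intros Hc Hf. apply Borel_of_lt. intros a.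
  apply (Hf (fun y => phi y < a)). intros Ms _ HMs. apply HMs.
  intros x hx. destruct (Hc x (a - phi x)) as [al [Hal Hal2]]; [lra|].
  exists al. split; [exact Hal|]. intros y hy.
  destruct (Req_dec y x) as [->|ne]; [exact hx|].
  assert (R_dist (phi y) (phi x) < a - phi x).
  { apply Hal2. split; [split; [exact I|auto]|exact hy]. }
  unfold R_dist in H. pose proof (Rle_abs (phi y - phi x)). lra.
Qed.

End BorelFunctions.

(** * Countable descriptions of the circumradius and the circumcenter *)
Section CountableDescription.
Context {X : Type} (d : X -> X -> R) (S : X -> Prop) (D y : nat -> X) (r : R).
Hypothesis HC : CAT0_space d.
Hypothesis HD : forall x e, 0 < e -> exists n, d (D n) x < e.
Hypothesis Hy_in : forall m, S (y m).
Hypothesis Hy_dense : forall b, S b -> forall e, 0 < e -> exists m, d b (y m) < e.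
Hypothesis Hr : is_circumradius d S r.

Lemma circumradius_lt_iff a :
  r < a <-> exists n k, forall m, d (D n) (y m) <= a - / (INR k + 1).
Proof.
  pose proof HC as [M _]. split.
  - intros h. destruct (inv_succ_small ((a - r) / 3)) as [k hk]; [lra|].
    pose proof (inv_succ_bounds k) as [hk0 _].
    destruct (circumradius_approx d S r _ Hr hk0) as [x hx].
    destruct (HD x _ hk0) as [n hn].
    exists n, k. intros m. pose proof (hx _ (Hy_in m)).
    pose proof (dist_tri d M (D n) x (y m)). lra.
  - intros [n [k Hk]].
    assert (t0 : 0 <= a - / (INR k + 1)).
    { pose proof (Hk 0%nat). pose proof (dist_nonneg d M (D n) (y 0%nat)). lra. }
    pose proof (circumradius_le d S r (D n) _ Hr t0
                  (bound_from_dense d M S y (D n) _ Hy_dense Hk)).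
    pose proof (inv_succ_bounds k). lra.
Qed.

Lemma near_center_of_bound c z t : (forall b, S b -> d c b <= r) -> 0 <= t ->
  (forall m, (d z (y m))^2 <= r^2 + t^2/2) -> d z c <= t.
Proof.
  intros Hc Ht Hz. pose proof HC as [M _].
  pose proof (circumradius_nonneg d S r Hr) as r0.
  set (s := sqrt (r^2 + t^2/2)).
  assert (hs : s^2 = r^2 + t^2/2) by (apply pow2_sqrt; nra).
  assert (Hs : forall b, S b -> d z b <= s).
  { apply (bound_from_dense d M S y z s Hy_dense). intros m.
    rewrite <- (sqrt_pow2 (d z (y m))) by (apply dist_nonneg, M).
    apply sqrt_le_1_alt, Hz. }
  pose proof (approximate_centers_close d S r (y 0%nat) z c s r HC Hr (Hy_in 0%nat) Hs Hc) as K.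
  pose proof (dist_nonneg d M z c).
  rewrite hs in K. nra.
Qed.

Lemma dense_point_near_center c t : (forall b, S b -> d c b <= r) -> 0 < t ->
  exists n, d (D n) c < t /\ forall m, (d (D n) (y m))^2 <= r^2 + t^2/2.
Proof.
  intros Hc Ht. pose proof HC as [M _].
  pose proof (circumradius_nonneg d S r Hr) as r0.
  set (e := Rmin t (t^2 / (2 * (2 * r + t)))).
  assert (he0 : 0 < e) by (apply Rmin_glb_lt; [lra|apply Rdiv_lt_0_compat; nra]).
  assert (he1 : e <= t) by apply Rmin_l.
  assert (he2 : e * (2 * r + t) <= t^2 / 2).
  { assert (e <= t^2 / (2 * (2 * r + t))) by apply Rmin_r.
    apply Rmult_le_compat_r with (r := 2 * r + t) in H; [|lra].
    replace (t^2 / (2 * (2 * r + t)) * (2 * r + t)) with (t^2 / 2) in H by (field; lra).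
    exact H. }
  destruct (HD c e he0) as [n hn].
  exists n. split; [lra|]. intros m.
  pose proof (Hc _ (Hy_in m)). pose proof (dist_tri d M (D n) c (y m)).
  pose proof (dist_nonneg d M (D n) (y m)).
  assert (d (D n) (y m) ^ 2 <= (e + r)^2) by (apply pow_incr; lra).
  assert (e * (2 * r + e) <= e * (2 * r + t)) by (apply Rmult_le_compat_l; lra).
  replace ((e + r)^2) with (r^2 + e * (2 * r + e)) in * by ring. lra.
Qed.

Lemma circumcenter_dist_lt_iff c x a : (forall b, S b -> d c b <= r) ->
  d x c < a <->
  exists k n, (forall m, (d (D n) (y m))^2 <= r^2 + (/ (INR k + 1))^2 / 2) /\
              d x (D n) < a - / (INR k + 1).
Proof.
  intros Hc. pose proof HC as [M _]. split.
  - intros h. destruct (inv_succ_small ((a - d x c) / 2)) as [k hk]; [lra|].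
    pose proof (inv_succ_bounds k) as [hk0 _].
    destruct (dense_point_near_center c _ Hc hk0) as [n [hn Hn]].
    exists k, n. split; [exact Hn|].
    pose proof (dist_tri d M x c (D n)). rewrite (dist_sym d M c (D n)) in H. lra.
  - intros [k [n [Hn hx]]]. pose proof (inv_succ_bounds k).
    assert (d (D n) c <= / (INR k + 1)) by (apply (near_center_of_bound c); [exact Hc|lra|exact Hn]).
    pose proof (dist_tri d M x (D n) c). lra.
Qed.

End CountableDescription.

Section BorelField.
Context {Om : Type} (A : (Om -> Prop) -> Prop) (X : Om -> Type)
  (d : forall w, X w -> X w -> R) (B : forall w, X w -> Prop)
  (D y : nat -> section X).
Hypothesis HA : is_sigma_algebra A.
Hypothesis HX : forall w, CAT0_space (d w).
(* Axiom (a) of a Borel structure, for the sections of [D] and [y]. *)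
Hypothesis Hdist : forall n m, Borel_function A (fun w => d w (D n w) (y m w)).
Hypothesis HD : forall w x e, 0 < e -> exists n, d w (D n w) x < e.
Hypothesis Hy_in : forall w m, B w (y m w).
Hypothesis Hy_dense : forall w b, B w b -> forall e, 0 < e -> exists m, d w b (y m w) < e.

Lemma circumradius_Borel rad : (forall w, is_circumradius (d w) (B w) (rad w)) ->
  Borel_function A rad.
Proof.
  intros Hr. apply Borel_of_lt; [exact HA|]. intros a.
  apply (sa_ext A (fun w => exists n k, forall m, d w (D n w) (y m w) <= a - / (INR k + 1))).
  - apply sa_union; [exact HA|]; intros n. apply sa_union; [exact HA|]; intros k.
    apply sa_inter; [exact HA|]; intros m. apply Borel_le; [exact HA|apply Hdist].
  - intros w. symmetry.
    apply (circumradius_lt_iff (d w) (B w) (fun n => D n w) (fun m => y m w));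
      [apply HX|apply HD|apply Hy_in|apply Hy_dense|apply Hr].
Qed.

Lemma circumcenter_dist_Borel rad c x :
  (forall w, is_circumradius (d w) (B w) (rad w)) ->
  (forall w, is_circumcenter (d w) (B w) (c w)) ->
  (forall n, Borel_function A (fun w => d w (x w) (D n w))) ->
  Borel_function A (fun w => d w (x w) (c w)).
Proof.
  intros Hr Hc Hx. apply Borel_of_lt; [exact HA|]. intros a.
  pose proof (circumradius_Borel rad Hr) as Brad.
  apply (sa_ext A (fun w => exists k n,
     (forall m, (d w (D n w) (y m w))^2 <= (rad w)^2 + (/ (INR k + 1))^2 / 2) /\
     d w (x w) (D n w) < a - / (INR k + 1))).
  - apply sa_union; [exact HA|]; intros k. apply sa_union; [exact HA|]; intros n.
    apply sa_and; [exact HA| |apply Borel_lt, Hx].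
    apply sa_inter; [exact HA|]. intros m.
    apply (Borel_le2 A HA (fun w => (d w (D n w) (y m w))^2)
                          (fun w => (rad w)^2 + (/ (INR k + 1))^2 / 2)).
    + apply (Borel_comp A HA (fun t => t^2)); [intros t; reg|apply Hdist].
    + apply (Borel_comp A HA (fun t => t^2 + (/ (INR k + 1))^2 / 2)); [intros t; reg|exact Brad].
  - intros w. symmetry.
    destruct (Hc w) as [r' [Hr' Hcb]].
    rewrite (circumradius_unique _ _ _ _ Hr' (Hr w)) in Hcb.
    apply (circumcenter_dist_lt_iff (d w) (B w) (fun n => D n w) (fun m => y m w));
      [apply HX|apply HD|apply Hy_in|apply Hy_dense|apply Hr|exact Hcb].
Qed.

End BorelField.

Theorem mainTheorem8 (Om : Type) (A : (Om -> Prop) -> Prop) (X : Om -> Type)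
  (d : forall w, X w -> X w -> R) (L : section X -> Prop) (B : forall w, X w -> Prop) :
  is_sigma_algebra A ->
  (forall w, CAT0_space (d w) /\ proper_space (d w)) ->
  is_Borel_structure A X d L ->
  is_Borel_subfield A X d L B ->
  (forall w, (exists x, B w x) /\ bounded_set (d w) (B w)) ->
  (* (i) the circumradius function is Borel *)
  ((exists rad : Om -> R, forall w, is_circumradius (d w) (B w) (rad w)) /\
   (forall rad : Om -> R, (forall w, is_circumradius (d w) (B w) (rad w)) ->
      Borel_function A rad)) /\
  (* (ii) the section of circumcenters is a Borel section *)
  ((exists c : section X, forall w, is_circumcenter (d w) (B w) (c w)) /\
   (forall c : section X, (forall w, is_circumcenter (d w) (B w) (c w)) -> L c)).
Proof.
  intros HA HX [Hdist [Hsec [D [HDL HD]]]] [_ [y [HyL Hy]]] Hne.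
  assert (HC : forall w, CAT0_space (d w)) by (intros w; apply HX).
  assert (Hy_in : forall w m, B w (y m w)) by (intros w; apply (Hy w (proj1 (Hne w)))).
  assert (Hy_dense : forall w b, B w b -> forall e, 0 < e -> exists m, d w b (y m w) < e)
    by (intros w; apply (Hy w (proj1 (Hne w)))).
  assert (Hdist_Dy : forall n m, Borel_function A (fun w => d w (D n w) (y m w)))
    by (intros n m; apply Hdist; auto).
  destruct (choice _ (fun w => circumradius_exists (d w) (B w) (proj2 (Hne w)))) as [rad Hrad].
  assert (Hcenter : forall w, exists c, is_circumcenter (d w) (B w) c).
  { intros w. destruct (Hne w) as [[b0 Hb0] _].
    exact (circumcenter_exists (d w) (B w) (rad w) b0 (HC w) (Hrad w) Hb0 (proj2 (HX w))). }
  split; split.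
  - exists rad. exact Hrad.
  - intros rad' Hrad'.
    exact (circumradius_Borel A X d B D y HA HC Hdist_Dy HD Hy_in Hy_dense rad' Hrad').
  - exists (fun w => proj1_sig (constructive_indefinite_description _ (Hcenter w))).
    intros w. exact (proj2_sig (constructive_indefinite_description _ (Hcenter w))).
  - intros c Hc. apply Hsec. intros x Hx.
    apply (circumcenter_dist_Borel A X d B D y HA HC Hdist_Dy HD Hy_in Hy_dense rad c x Hrad Hc).
    intros n. apply Hdist; auto.
Qed.
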